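(* Assume $5\gamma<\tau$, where $\tau=|S_c(P,B)|$, and let $c_e$ be the cost of the user at location $\tau-5\gamma$ of $S_c(P,B)$. Then for every mediator $m\in M$, $c_m\ge c_e$.
   Context: Model: finite sets of users $P$ (costs $c(p)\ge0$), mediators $M$ (the sets $P(m)$ partition $P$), advertisers $A$ (capacity $u(a)$ a positive integer, value $v(a)\ge0$); each advertiser $a$ has $u(a)$ slots of value $v(a)$; $B$ is the set of all slots. $\gamma\ge1$ is an integer-valued or real bound with $u(a)\le\gamma$ and $|P(m)|\le\gamma$ for all $a,m$ (locations such as $\tau-5\gamma$ are assumed to be positive integers). Costs/values are compared using a fixed tie-breaking rule making them all distinct. Canonical assignment $S_c(P',B')$: order slots of $B'$ by decreasing value $b_1,b_2,\dots$ and users of $P'$ by increasing cost $p_1,p_2,\dots$; include $(p_i,b_i)$ for $i\le\min\{|P'|,|B'|\}$ iff $v(b_i)>c(p_i)$; the user at location $i$ is $p_i$. Thresholds of the Price by Removal Mechanism: for each mediator $m$, if $|S_c(P\setminus P(m),B)|>4\gamma$, $c_m$ is the cost of the user at location $|S_c(P\setminus P(m),B)|-4\gamma$ of $S_c(P\setminus P(m),B)$; otherwise $c_m=-\infty$. *)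

From HB Require Import structures.
From mathcomp Require Import all_boot all_order all_algebra.
From mathcomp Require Export constructive_ereal.
Set Implicit Arguments. Unset Strict Implicit. Unset Printing Implicit Defensive.
Import Order.TTheory GRing.Theory Num.Theory.
Local Open Scope ring_scope.

Section Market.
Variables (R : realDomainType) (Pu Med Adv : finType).
(* c : user costs, med : mediator of each user (P(m) = med^-1(m)),
   u : advertiser capacities, v : advertiser values *)
Variables (c : Pu -> R) (med : Pu -> Med) (u : Adv -> nat) (v : Adv -> R).

Definition slot := {a : Adv & 'I_(u a)}.
Definition slot_value (b : slot) : R := v (tag b).

Definition users_of (m : Med) : {set Pu} := [set p | med p == m].

Definition sorted_users (P' : {set Pu}) : seq Pu :=
  sort (fun p q => c p <= c q) (enum P').
Definition sorted_slots (B' : {set slot}) : seq slot :=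
  sort (fun b b' => slot_value b' <= slot_value b) (enum B').

(* canonical assignment S_c(P', B'): pairs (p_i, b_i), i <= min(|P'|,|B'|),
   kept iff v(b_i) > c(p_i) *)
Definition canonical (P' : {set Pu}) (B' : {set slot}) : seq (Pu * slot) :=
  [seq pb <- zip (sorted_users P') (sorted_slots B') | c pb.1 < slot_value pb.2].

(* cost of the user at location i (1-indexed) of S_c(P', B'), i.e. c(p_i) *)
Definition cost_at (P' : {set Pu}) (i : nat) : R :=
  nth 0 [seq c p | p <- sorted_users P'] i.-1.

(* threshold c_m of the Price by Removal Mechanism (-oo encodes -infinity) *)
Definition threshold (gamma : nat) (m : Med) : \bar R :=
  let P' := ~: users_of m in
  let n := size (canonical P' [set: slot]) in
  if (4 * gamma < n)%N then (cost_at P' (n - 4 * gamma))%:E else -oo%E.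

End Market.

From HB Require Import structures.
From mathcomp Require Import all_boot all_order all_algebra.
From mathcomp Require Import constructive_ereal.
From mathcomp Require Import zify.
Set Implicit Arguments. Unset Strict Implicit.
Import Order.TTheory GRing.Theory Num.Theory.
Local Open Scope ring_scope.

(* Let C, C' be the increasing cost sequences of all users and of the users
   outside P(m), and V the decreasing sequence of slot values. The size of a
   canonical assignment is the length of the prefix on which C_i < V_i.
   Removing the at most gamma users of P(m) interlaces the order statistics:
   C_i <= C'_i <= C_(i+gamma). Hence the prefix shrinks by at most gamma,
   tau' >= tau - gamma, and c_m = C'_(tau'-4gamma) >= C'_(tau-5gamma)
   >= C_(tau-5gamma) = c_e. *)

Section PrefixCount.
Variables (T : Type) (x0 : T) (a : pred T) (s : seq T).

Lemma count_ge_prefix k :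
  (k <= size s)%N -> (forall i, (i < k)%N -> a (nth x0 s i)) -> (k <= count a s)%N.
Proof.
move=> ks prefix_a; rewrite -(cat_take_drop k s) count_cat.
have all_take : all a (take k s).
  by apply/(all_nthP x0) => i; rewrite size_takel // => ik; rewrite nth_take ?prefix_a.
by move: all_take; rewrite all_count size_takel // => /eqP ->; apply: leq_addr.
Qed.

Hypothesis a_downward :
  forall j k, (j <= k)%N -> (k < size s)%N -> a (nth x0 s k) -> a (nth x0 s j).

Lemma nth_lt_count i : (i < count a s)%N -> a (nth x0 s i).
Proof.
apply: contraTT => not_ai; rewrite -leqNgt -(cat_take_drop i s) count_cat.
have -> : count a (drop i s) = 0%N.
  apply/eqP; rewrite -leqn0 leqNgt -has_count; apply/(has_nthP x0) => -[k].
  rewrite size_drop nth_drop ltn_subRL => k_lt.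
  by move/(a_downward (leq_addr k i) k_lt); rewrite (negPf not_ai).
by rewrite addn0 (leq_trans (count_size _ _)) // size_take; case: ltnP.
Qed.

End PrefixCount.

Lemma count_zip_map (A B X Y : Type) (f : A -> X) (h : B -> Y) (r : X -> Y -> bool)
    (s : seq A) (t : seq B) :
  count (fun ab => r (f ab.1) (h ab.2)) (zip s t) =
  count (fun xy => r xy.1 xy.2) (zip (map f s) (map h t)).
Proof. by elim: s t => [|x s IH] [|y t] //=; rewrite IH. Qed.

Section OrderStatistics.
Variable R : realDomainType.
Implicit Types s t C V : seq R.

Lemma sorted_nth_le s j k :
  sorted <=%R s -> (j <= k)%N -> (k < size s)%N -> nth 0 s j <= nth 0 s k.
Proof.
move=> s_sorted jk ks; apply: (sorted_leq_nth le_trans lexx 0 s_sorted) => //.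
by rewrite inE (leq_ltn_trans jk ks).
Qed.

Lemma sorted_ge_nth_le s j k :
  sorted >=%R s -> (j <= k)%N -> (k < size s)%N -> nth 0 s k <= nth 0 s j.
Proof.
move=> s_sorted jk ks.
have ge_trans : transitive (>=%R : rel R) by move=> y x z /= yx zy; exact: le_trans zy yx.
apply: (sorted_leq_nth ge_trans lexx 0 s_sorted) => //.
by rewrite inE (leq_ltn_trans jk ks).
Qed.

Lemma nth_le_shift s t g i :
  sorted <=%R s -> sorted <=%R t ->
  (forall x, (count (<= x) s <= count (<= x) t + g)%N) ->
  (i + g < size s)%N -> nth 0 t i <= nth 0 s (i + g).
Proof.
move=> s_sorted t_sorted count_le ig_lt; apply: nth_count_le => //.
rewrite -(ltn_add2r g); apply: leq_trans (count_le _).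
by apply: (@count_ge_prefix _ 0 _ s (i + g).+1) => // j j_lt; rewrite /= sorted_nth_le.
Qed.

Definition matched C V := count (fun xy : R * R => xy.1 < xy.2) (zip C V).

Lemma matched_le_size C V : (matched C V <= minn (size C) (size V))%N.
Proof. by rewrite -size_zip count_size. Qed.

Lemma matched_ge C V k :
  (k <= size C)%N -> (k <= size V)%N ->
  (forall i, (i < k)%N -> nth 0 C i < nth 0 V i) -> (k <= matched C V)%N.
Proof.
move=> kC kV lt_k; apply: (@count_ge_prefix _ (0, 0) _ _ k); first by rewrite size_zip leq_min kC.
by move=> i ik; rewrite nth_zip_cond size_zip leq_min !(leq_trans ik) //= lt_k.
Qed.

Lemma nth_lt_matched C V i :
  sorted <=%R C -> sorted >=%R V -> (i < matched C V)%N -> nth 0 C i < nth 0 V i.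
Proof.
move=> C_sorted V_sorted i_lt.
have iz : (i < size (zip C V))%N by apply: leq_trans i_lt (count_size _ _).
have := nth_lt_count (x0 := (0, 0)) _ i_lt; rewrite nth_zip_cond iz; apply.
move=> j k jk kz; rewrite !nth_zip_cond kz (leq_ltn_trans jk kz) /=.
move: kz; rewrite size_zip leq_min => /andP[kC kV] lt_k.
apply: le_lt_trans (sorted_nth_le C_sorted jk kC) _.
exact: lt_le_trans lt_k (sorted_ge_nth_le V_sorted jk kV).
Qed.

Section Removal.
Variables (C C' V : seq R) (g : nat).
Hypotheses (C_sorted : sorted <=%R C) (C'_sorted : sorted <=%R C')
  (V_sorted : sorted >=%R V).
Hypothesis count_C_le : forall x, (count (<= x) C <= count (<= x) C' + g)%N.
Hypothesis size_C_le : (size C <= size C' + g)%N.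

Lemma matched_removal_ge : (matched C V - g <= matched C' V)%N.
Proof.
have [tC tV] : (matched C V <= size C)%N /\ (matched C V <= size V)%N.
  by apply/andP; rewrite -leq_min matched_le_size.
apply: matched_ge; [lia | lia |] => i i_lt.
have ig_lt : (i + g < matched C V)%N by lia.
have C'_le_C : nth 0 C' i <= nth 0 C (i + g).
  by apply: (nth_le_shift C_sorted C'_sorted count_C_le); rewrite (leq_trans ig_lt tC).
have V_le_V : nth 0 V (i + g) <= nth 0 V i.
  by apply: sorted_ge_nth_le; rewrite ?leq_addr // (leq_trans ig_lt tV).
exact: le_lt_trans C'_le_C (lt_le_trans (nth_lt_matched C_sorted V_sorted ig_lt) V_le_V).
Qed.

Hypothesis count_C'_le : forall x, (count (<= x) C' <= count (<= x) C)%N.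

Lemma matched_removal_nth_le :
  (5 * g < matched C V)%N ->
  (4 * g < matched C' V)%N /\
  nth 0 C (matched C V - 5 * g).-1 <= nth 0 C' (matched C' V - 4 * g).-1.
Proof.
move=> tau_gt; have tau'_ge := matched_removal_ge.
have tau'_C' : (matched C' V <= size C')%N.
  by apply: leq_trans (matched_le_size _ _) (geq_minl _ _).
split; first lia.
set j := (matched C V - 5 * g).-1.
apply: le_trans (_ : nth 0 C' j <= _); last by apply: sorted_nth_le; rewrite /j; lia.
have count_C'_le0 x : (count (<= x) C' <= count (<= x) C + 0)%N by rewrite addn0.
by have := nth_le_shift (i := j) C'_sorted C_sorted count_C'_le0; rewrite !addn0; apply; lia.
Qed.

End Removal.
End OrderStatistics.

Lemma card_sep_subset (T : finType) (A A' : {set T}) (q : pred T) :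
  A' \subset A ->
  (#|[set p in A' | q p]| <= #|[set p in A | q p]| <= #|[set p in A' | q p]| + #|A :\: A'|)%N.
Proof.
move=> A'A; apply/andP; split.
  by apply: subset_leq_card; apply/subsetP => p; rewrite !inE => /andP[/(subsetP A'A) -> ->].
apply: leq_trans (leq_card_setU _ _); apply: subset_leq_card; apply/subsetP => p.
by rewrite !inE => /andP[-> ->]; rewrite !andbT orbN.
Qed.

Section Market.
Variables (R : realDomainType) (Pu Adv : finType).
Variables (c : Pu -> R) (u : Adv -> nat) (v : Adv -> R).

Definition costs (P' : {set Pu}) : seq R := map c (sorted_users c P').
Definition values (B' : {set slot u}) : seq R := map (slot_value v) (sorted_slots v B').

Lemma size_canonical P' B' : size (canonical c v P' B') = matched (costs P') (values B').
Proof. by rewrite size_filter (count_zip_map c (slot_value v) (fun x y => x < y)). Qed.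

Lemma costs_sorted P' : sorted <=%R (costs P').
Proof. by rewrite sorted_map; apply: sort_sorted => p q; exact: le_total. Qed.

Lemma values_sorted B' : sorted >=%R (values B').
Proof. by rewrite sorted_map; apply: sort_sorted => p q; exact: le_total. Qed.

Lemma size_costs P' : size (costs P') = #|P'|.
Proof. by rewrite size_map size_sort cardE. Qed.

Lemma count_costs P' x : count (<= x) (costs P') = #|[set p in P' | c p <= x]|.
Proof.
rewrite count_map.
have /permP -> : perm_eq (sorted_users c P') (enum P') by rewrite perm_sort.
rewrite cardE /enum_mem size_filter count_filter.
by apply: eq_count => p; rewrite !inE andbC.
Qed.

End Market.

Theorem lemma9 (R : realDomainType) (Pu Med Adv : finType)
  (c : Pu -> R) (med : Pu -> Med) (u : Adv -> nat) (v : Adv -> R)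
  (gamma : nat)
  (c_ge0 : forall p, 0 <= c p)
  (v_ge0 : forall a, 0 <= v a)
  (u_gt0 : forall a, (0 < u a)%N)
  (med_surj : forall m, exists p, med p = m)
  (gamma_ge1 : (1 <= gamma)%N)
  (u_le : forall a, (u a <= gamma)%N)
  (Pm_le : forall m, (#|users_of med m| <= gamma)%N)
  (c_inj : injective c)
  (c_neq_v : forall p a, c p != v a) :
  let tau := size (canonical c v [set: Pu] [set: slot u]) in
  (5 * gamma < tau)%N ->
  let c_e := cost_at c [set: Pu] (tau - 5 * gamma) in
  forall m : Med, (c_e%:E <= threshold c med u v gamma m)%E.
Proof.
move=> tau tau_gt c_e m.
set U := users_of med m.
have interlace x := card_sep_subset (fun p => c p <= x) (subsetT (~: U)).
have count_C_le x : (count (<= x) (costs c [set: Pu])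
    <= count (<= x) (costs c (~: U)) + gamma)%N.
  have /andP[_ le_removed] := interlace x.
  rewrite !count_costs (leq_trans le_removed) //.
  by rewrite setTD setCK leq_add2l Pm_le.
have count_C'_le x : (count (<= x) (costs c (~: U)) <= count (<= x) (costs c [set: Pu]))%N.
  by have /andP[] := interlace x; rewrite !count_costs.
have size_C_le : (size (costs c [set: Pu]) <= size (costs c (~: U)) + gamma)%N.
  by rewrite !size_costs cardsT -(cardsC U) addnC leq_add2l Pm_le.
move: tau_gt; rewrite /c_e /tau size_canonical => tau_gt.
have [tau'_gt c_e_le] := matched_removal_nth_le (costs_sorted c _) (costs_sorted c _)
  (values_sorted v _) count_C_le size_C_le count_C'_le tau_gt.
by rewrite /threshold /= size_canonical tau'_gt lee_fin.
Qed.
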